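(* A topological space $X$ has the property $\bigcup_{\mathrm{fin}}(\mathcal O,\Gamma)$ if and only if for every sequence $(u_n)_{n\in\omega}$ of open covers of $X$ there exists a sequence $(v_n)_{n\in\omega}$, each $v_n$ a finite subset of $u_n$, such that, letting $w=\{\cup v_n:n\in\omega\}$, the semifilter $\uparrow\{\mu_w(x):x\in X\}$ is meager.
   Context: For an indexed family $w=\{W_n:n\in\omega\}$ of subsets of $X$ let $\mu_w(x)=\{n\in\omega:x\in W_n\}$. $A\subset^\ast B$ means $A\setminus B$ is finite. For a family $\mathcal A$ of subsets of $\omega$, $\uparrow\mathcal A=\{B\subset\omega:\exists A\in\mathcal A\ (A\subset^\ast B)\}$; meager refers to $\mathcal P(\omega)$ identified with the Cantor space $\{0,1\}^\omega$. $w$ is a $\gamma$-cover of $X$ if $\mu_w(x)$ is cofinite in $\omega$ for every $x\in X$. $X$ has $\bigcup_{\mathrm{fin}}(\mathcal O,\Gamma)$ if for every sequence $(u_n)_{n\in\omega}$ of open covers of $X$ there are finite $v_n\subset u_n$ such that $\{\cup v_n:n\in\omega\}$ is a $\gamma$-cover of $X$. *)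

From HB Require Import structures.
From mathcomp Require Import all_boot all_order all_algebra.
From mathcomp Require Import all_classical all_reals topology cantor.
Set Implicit Arguments. Unset Strict Implicit. Unset Printing Implicit Defensive.
Import numFieldTopology.Exports.
Local Open Scope classical_set_scope.

Definition open_cover (X : topologicalType) (u : set (set X)) : Prop :=
  (forall U, u U -> open U) /\ \bigcup_(U in u) U = [set: X].

Definition mu (X : Type) (W : nat -> set X) (x : X) : set nat := [set n | W n x].

Definition gamma_cover (X : Type) (W : nat -> set X) : Prop :=
  forall x, finite_set (~` mu W x).

(* upward closure modulo finite: B such that A \subset^* B for some A in F *)
Definition upstar (F : set (set nat)) : set (set nat) :=
  [set B | exists2 A, F A & finite_set (A `\` B)].

Definition nowhere_dense (T : topologicalType) (A : set T) : Prop :=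
  interior (closure A) = set0.

Definition meager (T : topologicalType) (A : set T) : Prop :=
  exists F : nat -> set T, (forall n, nowhere_dense (F n)) /\ A `<=` \bigcup_n F n.

(* meagerness in P(omega), identified with the Cantor space {0,1}^omega
   via B <-> indicator function of B *)
Definition meager_Pomega (S : set (set nat)) : Prop :=
  meager [set f : cantor_space | S [set n | f n = true]].

Definition Ufin_O_Gamma (X : topologicalType) : Prop :=
  forall u : nat -> set (set X), (forall n, open_cover (u n)) ->
  exists v : nat -> set (set X),
    (forall n, finite_set (v n) /\ v n `<=` u n) /\
    gamma_cover (fun n => \bigcup_(U in v n) U).

From HB Require Import structures.
From mathcomp Require Import all_boot all_order all_algebra.
From mathcomp Require Import all_classical all_reals topology cantor.
From mathcomp Require Import zify.
Import numFieldTopology.Exports.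
Local Open Scope classical_set_scope.
Set Implicit Arguments. Unset Strict Implicit. Unset Printing Implicit Defensive.

(** Suppose [upstar (range M)] is covered by nowhere dense sets [F j] of the
  Cantor space.  Handling the finitely many prefixes below [k i] one bit at a
  time, one finds an interval partition [[k i, k i.+1)] of [nat] and a single
  [T] such that every point agreeing with [T] on the [i]-th interval avoids
  [F 0], ..., [F i].  Then every [M x] meets all but finitely many intervals:
  otherwise [M x `|` T], which lies in [upstar (range M)], agrees with [T] on
  intervals of arbitrarily large index.  Applied to the covers
  [u 0 /\ ... /\ u n] of finite intersections, this lets us regroup the finite
  families [v n] along the intervals into a gamma-cover.  Conversely, the
  cofinite sets form a meager family. *)

Definition agree_on (n m : nat) (f : cantor_space) : set cantor_space :=
  [set g | forall i, (n <= i < m)%N -> g i = f i].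

Notation cylinder f m := (agree_on 0 m f).

Lemma agree_on_le n m m' f : (m <= m')%N -> agree_on n m' f `<=` agree_on n m f.
Proof. by move=> lem g Hg i /andP[? ?]; apply: Hg; lia. Qed.

Lemma agree_on_trans n m f g h :
  agree_on n m f g -> agree_on n m g h -> agree_on n m f h.
Proof. by move=> Hg Hh i Hi; rewrite Hh ?Hg. Qed.

Lemma cylinder_nbhs (f : cantor_space) m : nbhs f (cylinder f m).
Proof.
elim: m => [|m IH]; first by apply: filterS filterT => g _ i.
have Hm : nbhs f (proj m @^-1` [set f m]).
  by apply: (@proj_continuous nat (fun _ => bool) m f); apply: discrete_set1.
apply: filterS (filterI IH Hm) => g [Hg gm] i /= /[!ltnS].
by rewrite leq_eqVlt => /orP[/eqP ->|/Hg].
Qed.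

Lemma nbhs_cylinder (f : cantor_space) N :
  nbhs f N -> exists m, cylinder f m `<=` N.
Proof.
pose G : set_system cantor_space := [set N | exists m, cylinder f m `<=` N].
have G_filter : Filter G.
  constructor; first by exists 0.
  - move=> P Q [m Pm] [n Qn]; exists (maxn m n) => g Hg.
    by split; [apply: Pm | apply: Qn]; apply: agree_on_le _ _ Hg; lia.
  - by move=> P Q PQ [m Pm]; exists m => g /Pm /PQ.
suff : G --> f by apply.
apply/cvg_sup => i U [V] [[W] _ <-] Wfi WU; apply: (filterS WU).
by exists i.+1 => g /(_ i); rewrite ltnSn => /= ->.
Qed.

Lemma nowhere_denseP (F : set cantor_space) :
  nowhere_dense F <-> forall f m, exists g m',
    [/\ (m <= m')%N, cylinder f m g & cylinder g m' `<=` ~` F].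
Proof.
split=> [ndF f m | avoidF].
  apply: contrapT => not_avoid.
  suff : interior (closure F) f by rewrite ndF.
  apply: filterS (cylinder_nbhs f m) => g fg B /nbhs_cylinder [m' gB].
  apply: contrapT => BF; apply: not_avoid; exists g, (maxn m m').
  split; [exact: leq_maxl | by [] | move=> h gh Fh; apply: BF; exists h].
  by split => //; apply/gB/(agree_on_le (leq_maxr m m') gh).
apply/seteqP; split => // f /nbhs_cylinder [m fF].
have [g [m' [_ /fF clFg gF]]] := avoidF f m.
by have [h [Fh /gF]] := clFg _ (cylinder_nbhs g m').
Qed.

Lemma nowhere_dense0 (T : topologicalType) : nowhere_dense (@set0 T).
Proof. by rewrite /nowhere_dense closure0 interior0. Qed.

Lemma nowhere_denseU (F G : set cantor_space) :
  nowhere_dense F -> nowhere_dense G -> nowhere_dense (F `|` G).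
Proof.
move=> /nowhere_denseP avoidF /nowhere_denseP avoidG; apply/nowhere_denseP => f m.
have [g [m1 [m_m1 fg gF]]] := avoidF f m.
have [h [m2 [m1_m2 gh hG]]] := avoidG g m1.
exists h, m2; split; first exact: leq_trans m1_m2.
  exact: agree_on_trans fg (agree_on_le m_m1 gh).
move=> e he [/gF|/hG]; apply; last by [].
exact: agree_on_trans gh (agree_on_le m1_m2 he).
Qed.

Lemma nowhere_dense_bigcup_ord (F : nat -> set cantor_space) n :
  (forall j, nowhere_dense (F j)) -> nowhere_dense (\bigcup_(j < n) F j).
Proof.
move=> ndF; rewrite bigcup_mkord.
by apply: big_ind => //; [exact: nowhere_dense0 | exact: nowhere_denseU].
Qed.

Definition set_bit (n : nat) (b : bool) (t : cantor_space) : cantor_space :=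
  fun i => if i == n then b else t i.

Lemma nowhere_dense_agree_on (F : set cantor_space) : nowhere_dense F ->
  forall n t0 m0, exists m t,
    [/\ (m0 <= m)%N, agree_on n m0 t0 t & agree_on n m t `<=` ~` F].
Proof.
move=> /nowhere_denseP avoidF; elim=> [|n IH] t0 m0.
  have [t [m [m0_m t0t tF]]] := avoidF t0 m0.
  by exists m, t.
have [m1 [t1 [m0_m1 t0t1 t1F]]] := IH (set_bit n true t0) (maxn m0 n.+1).
(* Bit [n] is left free: [t1] serves the points with [g n] set, and [t2],
   which extends [t1] above [n], those with [g n] cleared. *)
have [m2 [t2 [m1_m2 t1t2 t2F]]] := IH (set_bit n false t1) m1.
exists m2, t2; split; first by lia.
  move=> i /andP[ni im0]; have /negbTE i_n : i != n by lia.
  rewrite t1t2 /set_bit ?i_n ?t0t1 /set_bit ?i_n //; lia.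
move=> g t2g; case: (boolP (g n)) => gn.
  apply: t1F => i /andP[ni im1]; case: (eqVneq i n) => [->|i_n].
    by rewrite gn t0t1 /set_bit ?eqxx //; lia.
  by rewrite t2g ?t1t2 /set_bit ?(negbTE i_n) //; lia.
apply: t2F => i /andP[ni im2]; case: (eqVneq i n) => [->|i_n].
  by rewrite t1t2 /set_bit ?eqxx ?(negbTE gn) //; lia.
by rewrite t2g //; lia.
Qed.

Lemma interval_index_unique (k : nat -> nat) : (forall i, (k i < k i.+1)%N) ->
  forall i j n, (k i <= n < k i.+1)%N -> (k j <= n < k j.+1)%N -> i = j.
Proof.
move=> k_incr i j n /andP[ki_n n_ki] /andP[kj_n n_kj].
have k_homo : {homo k : a b / (a <= b)%N}.
  exact: homo_leq leqnn leq_trans (fun a => ltnW (k_incr a)).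
by apply/eqP; rewrite eqn_leq; apply/andP; split; rewrite leqNgt;
  apply/negP => /k_homo; lia.
Qed.

Lemma nowhere_dense_intervals (F : nat -> set cantor_space) :
  (forall j, nowhere_dense (F j)) ->
  exists (k : nat -> nat) (T : cantor_space), (forall i, (k i < k i.+1)%N) /\
    forall i, agree_on (k i) (k i.+1) T `<=` ~` \bigcup_(j < i.+1) F j.
Proof.
move=> ndF.
have avoid_step (p : nat * nat) : exists mt : nat * cantor_space,
    (p.2 < mt.1)%N /\ agree_on p.2 mt.1 mt.2 `<=` ~` \bigcup_(j < p.1.+1) F j.
  have [m [t [lt_m _ tF]]] :=
    nowhere_dense_agree_on (nowhere_dense_bigcup_ord p.1.+1 ndF) p.2 point p.2.+1.
  by exists (m, t).
have [next Hnext] := choice avoid_step.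
pose k := fix k i := if i is i'.+1 then (next (i', k i')).1 else 0.
pose t i := (next (i, k i)).2.
have k_incr i : (k i < k i.+1)%N by exact: (Hnext (i, k i)).1.
exists k, (fun n => `[< exists2 i, (k i <= n < k i.+1)%N & t i n >]).
split=> // i g Tg; apply: (Hnext (i, k i)).2 => n n_in; rewrite Tg //.
apply/asboolP/idP => [[i' n_in' ?] | tin]; last by exists i.
by rewrite (interval_index_unique k_incr n_in n_in').
Qed.

Lemma meager_upstar_intervals (I : Type) (M : I -> set nat) :
  meager_Pomega (upstar (range M)) ->
  exists k : nat -> nat, (forall i, (k i < k i.+1)%N) /\
    forall x, exists J, forall i, (J <= i)%N ->
      exists2 n, (k i <= n < k i.+1)%N & M x n.
Proof.
move=> [F [ndF coverF]].
have [k [T [k_incr TF]]] := nowhere_dense_intervals ndF.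
exists k; split => // x; apply: contrapT => not_eventually.
have missed J : exists2 i, (J <= i)%N &
    forall n, (k i <= n < k i.+1)%N -> ~ M x n.
  apply: contrapT => HJ; apply: not_eventually; exists J => i Ji.
  apply: contrapT => Hi; apply: HJ; exists i => // n Hn Mn.
  by apply: Hi; exists n.
pose B : cantor_space := fun n => `[< M x n >] || T n.
have [j _ FjB] : (\bigcup_j F j) B.
  apply: coverF; exists (M x); first by exists x.
  apply: (sub_finite_set _ (finite_set0 nat)) => n [Mn].
  by apply; rewrite /= /B asboolT.
have [i ji Hi] := missed j.
apply: (TF i B); last by exists j => //=; lia.
by move=> n /Hi Mn; rewrite /B asboolF.
Qed.

Lemma finite_set_nat_bounded (A : set nat) :
  finite_set A -> exists N, forall n, A n -> (n < N)%N.
Proof.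
move/finite_seqP => [s ->]; exists (\max_(i <- s) i).+1 => n /= ns.
by rewrite ltnS; apply: leq_bigmax_seq.
Qed.

Lemma upstar_cofinite (F : set (set nat)) :
  (forall A, F A -> cofinite_set A) -> forall B, upstar F B -> cofinite_set B.
Proof.
move=> Fcof B [A /Fcof cofA finAB].
apply: (@sub_finite_set _ _ ((A `\` B) `|` ~` A)); last by rewrite finite_setU.
by move=> n nB; have [An|nA] := pselect (A n); [left | right].
Qed.

Lemma cofinite_meager (S : set (set nat)) :
  (forall B, S B -> cofinite_set B) -> meager_Pomega S.
Proof.
move=> Scof.
exists (fun N => [set f : cantor_space | forall n, (N <= n)%N -> f n]).
split=> [N | f /Scof /finite_set_nat_bounded [N leN]]; last first.
  by exists N => // n Nn; apply: contrapT => /leN; lia.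
apply/nowhere_denseP => f m; pose p := maxn m N.
exists (set_bit p false f), p.+1; split => [||g fg gN].
- exact: leq_trans (leq_maxl m N) (leqnSn p).
- by move=> i /= im; rewrite /set_bit ifN_eq //; lia.
- by have := gN p (leq_maxr m N); rewrite fg ?ltnSn // /set_bit eqxx.
Qed.

Section Covers.
Variable X : topologicalType.

Definition meet_cover (u : nat -> set (set X)) (n : nat) : set (set X) :=
  [set \bigcap_(j < n.+1) U j
    | U in [set U | forall j, (j < n.+1)%N -> u j (U j)]].

Lemma open_cover_meet_cover (u : nat -> set (set X)) n :
  (forall n, open_cover (u n)) -> open_cover (meet_cover u n).
Proof.
move=> ucov; split=> [_ [U uU <-]|].
  rewrite bigcap_mkord; apply: big_ind => //; [exact: openT | exact: openI |].
  by move=> j _; apply: (ucov j).1; apply: uU.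
apply/seteqP; split => // y _.
have /choice[U Uy] : forall j, exists U, u j U /\ U y.
  move=> j; have [U uU Uy] : (\bigcup_(U in u j) U) y by rewrite (ucov j).2.
  by exists U.
exists (\bigcap_(j < n.+1) U j); last by move=> j _; case: (Uy j).
by exists U => // j _; case: (Uy j).
Qed.

Lemma gamma_cover_from_intervals (u v : nat -> set (set X)) (k : nat -> nat) :
  (forall n, finite_set (v n) /\ v n `<=` meet_cover u n) ->
  (forall i, (k i < k i.+1)%N) ->
  (forall x, exists J, forall i, (J <= i)%N ->
     exists2 n, (k i <= n < k i.+1)%N & mu (fun n => \bigcup_(U in v n) U) x n) ->
  exists v' : nat -> set (set X),
    (forall m, finite_set (v' m) /\ v' m `<=` u m) /\
    gamma_cover (fun m => \bigcup_(U in v' m) U).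
Proof.
move=> vfin k_incr vk.
have k_ge i : (i <= k i)%N.
  by elim: i => // i IH; apply: leq_ltn_trans IH (k_incr i).
have lt_k m n : (k m <= n)%N -> (m < n.+1)%N by rewrite ltnS; apply: leq_trans.
have /choice[c c_meet] : forall nW : nat * set X, exists U : nat -> set X,
    meet_cover u nW.1 nW.2 ->
    (forall j, (j < nW.1.+1)%N -> u j (U j)) /\ nW.2 = \bigcap_(j < nW.1.+1) U j.
  move=> [n W]; have [[U uU <-]|not_meet] := pselect (meet_cover u n W).
    by exists U.
  by exists point.
exists (fun m => \bigcup_(n in [set n | (k m <= n < k m.+1)%N])
                 [set c (n, W) m | W in v n]).
split=> [m|x].
  split.
    apply: bigcup_finite => [|n _]; last exact/finite_image/(vfin n).1.
    by apply: (sub_finite_set _ (finite_II (k m.+1))) => n /andP[].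
  move=> _ [n /andP[kn nk] [W vW <-]]; apply: (c_meet (n, W) ((vfin n).2 W vW)).1.
  exact: lt_k kn.
have [J HJ] := vk x; apply: (sub_finite_set _ (finite_II J)) => m /= xm.
apply: contrapT => /negP; rewrite -leqNgt => /HJ [n n_in [W vW Wx]]; apply: xm.
exists (c (n, W) m); first by exists n => //; exists W.
have [_ /= W_eq] := c_meet (n, W) ((vfin n).2 W vW).
have : (\bigcap_(j < n.+1) c (n, W) j) x by rewrite -W_eq.
by apply; case/andP: n_in => /lt_k.
Qed.

End Covers.

Theorem proposition9 (X : topologicalType) :
  Ufin_O_Gamma X <->
  (forall u : nat -> set (set X), (forall n, open_cover (u n)) ->
   exists v : nat -> set (set X),
     (forall n, finite_set (v n) /\ v n `<=` u n) /\
     meager_Pomega (upstar (range (mu (fun n => \bigcup_(U in v n) U))))).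
Proof.
split=> [gammaX u ucov | meagerX u ucov].
  have [v [vfin vgamma]] := gammaX u ucov; exists v; split => //.
  by apply/cofinite_meager/upstar_cofinite => _ [x _ <-]; apply: vgamma.
have [v [vfin vmeager]] := meagerX _ (fun n => open_cover_meet_cover n ucov).
have [k [k_incr vk]] := meager_upstar_intervals vmeager.
exact: gamma_cover_from_intervals vfin k_incr vk.
Qed.
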